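(* Let $\lambda=2\cos(\pi/5)$ and let $H_5$ be the subgroup of $SL(2,\mathbb R)$ generated by $S=\begin{pmatrix}0&1\\-1&0\end{pmatrix}$ and $T=\begin{pmatrix}1&\lambda\\0&1\end{pmatrix}$. Let $p$ be an odd rational prime. Suppose that $H(p)$ contains an element $\sigma$ with $\sigma\equiv\begin{pmatrix}1&p\\0&1\end{pmatrix}\pmod{p^2}$. Then $[H(p^n):H(p^{n+1})]=p^6$ for every positive integer $n$, and $[H_5:H(p^n)]=p^{6(n-1)}[H_5:H(p)]$ for every positive integer $n$.
   Context: For $\alpha\in\mathbb Z[\lambda]$, $H(\alpha)=\{(a_{ij})\in H_5 : a_{11}-1,\ a_{22}-1,\ a_{12},\ a_{21}\in \alpha\mathbb Z[\lambda]\}$. Congruence of matrices modulo $p^2$ means entrywise congruence modulo the ideal $p^2\mathbb Z[\lambda]$. *)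

From HB Require Import structures.
From mathcomp Require Import all_boot all_order all_algebra.
From mathcomp Require Import all_classical all_reals all_analysis.
Set Implicit Arguments. Unset Strict Implicit. Unset Printing Implicit Defensive.
Import Order.TTheory GRing.Theory Num.Theory.
Local Open Scope ring_scope.

Definition mx2 (R : ringType) (a b c d : R) : 'M[R]_2 :=
  \matrix_(i < 2, j < 2)
    if (i : nat) == 0%N then (if (j : nat) == 0%N then a else b)
    else (if (j : nat) == 0%N then c else d).

Definition lam (R : realType) : R := 2 * cos (pi / 5%:R).

Definition Smx (R : realType) : 'M[R]_2 := mx2 0 1 (-1) 0.
Definition Tmx (R : realType) : 'M[R]_2 := mx2 1 (lam R) 0 1.

Inductive H5 (R : realType) : 'M[R]_2 -> Prop :=
| H5_one : H5 1%:M
| H5_S : H5 (Smx R)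
| H5_T : H5 (Tmx R)
| H5_mul A B : H5 A -> H5 B -> H5 (A *m B)
| H5_inv A : H5 A -> H5 (invmx A).

Definition inZlam (R : realType) (x : R) : Prop :=
  exists a b : int, x = a%:~R + b%:~R * lam R.

Definition inIdeal (R : realType) (alpha x : R) : Prop :=
  exists y, inZlam y /\ x = alpha * y.

Definition e11 (R : ringType) (A : 'M[R]_2) : R := A ord0 ord0.
Definition e12 (R : ringType) (A : 'M[R]_2) : R := A ord0 ord_max.
Definition e21 (R : ringType) (A : 'M[R]_2) : R := A ord_max ord0.
Definition e22 (R : ringType) (A : 'M[R]_2) : R := A ord_max ord_max.

Definition Hcong (R : realType) (alpha : R) (A : 'M[R]_2) : Prop :=
  [/\ H5 A, inIdeal alpha (e11 A - 1), inIdeal alpha (e22 A - 1),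
      inIdeal alpha (e12 A) & inIdeal alpha (e21 A)].

Definition congmx (R : realType) (alpha : R) (A B : 'M[R]_2) : Prop :=
  forall i j, inIdeal alpha (A i j - B i j).

(* [G : K] = k  (K a subgroup of G, k finite): there are k left-coset
   representatives g_0..g_{k-1} in G such that every g in G lies in exactly
   one coset g_i K. *)
Definition index_eq (R : realType) (G K : 'M[R]_2 -> Prop) (k : nat) : Prop :=
  exists f : 'I_k -> 'M[R]_2,
    (forall i, G (f i)) /\
    (forall g, G g -> exists! i, K (invmx (f i) *m g)).

From Pilot Require Import Defs.
From HB Require Import structures.
From mathcomp Require Import all_boot all_order all_algebra.
From mathcomp Require Import all_classical all_reals all_analysis.
From mathcomp Require Import ring lra zify.
Import Order.TTheory GRing.Theory Num.Theory.

(* Write g in H(p^n) as g = 1 + p^n Y with Y a Z[lam]-matrix.  For n > 0 the residue of Y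
   modulo p determines the coset of g modulo H(p^(n+1)), and det g = 1 forces tr Y = 0 modulo
   p; since 1 and lam are linearly independent over Z (a^2 + ab - b^2 = 0 only for b = 0),
   Z[lam]/p has p^2 elements, so there are at most p^6 cosets.  All traceless residues occur:
   the residue of a product is the sum of the residues, conjugation by H_5 acts on residues,
   sigma has residue E12 at level 1, and sigma^(p^(n-1)) has residue E12 at level n because
   p is odd.  Conjugating E12 by S and T and taking integer combinations (lam^2 = lam + 1,
   2 invertible modulo p) spans all traceless Z[lam]-matrices.  Finally [H_5 : H(p)] is finite
   (residues of H_5 modulo p) and indices multiply along H_5 > H(p) > ... > H(p^n). *)

Set Implicit Arguments.
Unset Strict Implicit.
Unset Printing Implicit Defensive.

Local Open Scope ring_scope.

Lemma golden_form_eq0 (a b : int) : a * a + a * b - b * b = 0 -> b = 0.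
Proof.
move: {2}`|b|%N (leqnn `|b|%N) => n; elim: n a b => [|n IH] a b hb h; first by lia.
have ea := divz_eq a 2; have eb := divz_eq b 2.
have ra : (0 <= (a %% 2)%Z < 2)%R by rewrite modz_ge0 // ltz_pmod.
have rb : (0 <= (b %% 2)%Z < 2)%R by rewrite modz_ge0 // ltz_pmod.
set a' := (a %/ 2)%Z in ea; set b' := (b %/ 2)%Z in eb.
have [a0|a1] : (a %% 2)%Z = 0 \/ (a %% 2)%Z = 1 by lia.
all: have [b0|b1] : (b %% 2)%Z = 0 \/ (b %% 2)%Z = 1 by lia.
all: rewrite ?a0 ?a1 ?b0 ?b1 ?addr0 in ea eb; rewrite ea eb in h hb; try lia.
suff: b' = 0 by rewrite eb => ->.
by apply: (IH a'); lia.
Qed.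

Section PrincipalIdeal.
Variables (F : fieldType) (S : subringClosed F).

(* The ideal q S of the subring S, meaningful for q != 0 (for q = 0 it is all of F). *)
Definition pideal (q : F) : {pred F} := fun x => q^-1 * x \in S.

Lemma pidealE q x : (x \in pideal q) = (q^-1 * x \in S).
Proof. by []. Qed.

Fact pideal_zmod q : zmod_closed (pideal q).
Proof.
split=> [|x y]; rewrite !pidealE ?mulr0 ?rpred0 //.
by rewrite mulrBr; apply: rpredB.
Qed.

HB.instance Definition _ q := GRing.isZmodClosed.Build F (pideal q) (pideal_zmod q).

Lemma pideal1 x : (x \in pideal 1) = (x \in S).
Proof. by rewrite pidealE invr1 mul1r. Qed.

Lemma pidealMl q y x : y \in S -> x \in pideal q -> y * x \in pideal q.
Proof. by rewrite !pidealE mulrCA; apply: rpredM. Qed.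

Lemma pidealMr q y x : y \in S -> x \in pideal q -> x * y \in pideal q.
Proof. by rewrite mulrC; apply: pidealMl. Qed.

Lemma pidealM q r x y : x \in pideal q -> y \in pideal r -> x * y \in pideal (q * r).
Proof.
by rewrite !pidealE invfM mulrACA; apply: rpredM.
Qed.

Lemma pideal_mulr q y : q != 0 -> y \in S -> q * y \in pideal q.
Proof. by move=> q0; rewrite pidealE mulKf. Qed.

Lemma pideal_scale q r x : q != 0 -> (q * x \in pideal (q * r)) = (x \in pideal r).
Proof. by move=> q0; rewrite !pidealE invfM -mulrA [q^-1 * _]mulrCA mulKf. Qed.

Lemma pidealW q r x : r != 0 -> r \in S -> x \in pideal (q * r) -> x \in pideal q.
Proof.
move=> r0 rS; rewrite !pidealE => qrx.
suff -> : q^-1 * x = r * ((q * r)^-1 * x) by apply: rpredM.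
by rewrite invfM -mulrA mulrCA mulVKf.
Qed.


Section Matrices.
Variables m n l : nat.
Implicit Types (q : F) (A : 'M[F]_(m, n)) (B : 'M[F]_(n, l)).

Lemma mxOver_pidealMl q A B :
  A \is a mxOver S -> B \is a mxOver (pideal q) -> A *m B \is a mxOver (pideal q).
Proof.
move=> /mxOverP AS /mxOverP Bq; apply/mxOverP => i j; rewrite mxE.
by apply: rpred_sum => k _; apply: pidealMl.
Qed.

Lemma mxOver_pidealMr q A B :
  A \is a mxOver (pideal q) -> B \is a mxOver S -> A *m B \is a mxOver (pideal q).
Proof.
move=> /mxOverP Aq /mxOverP BS; apply/mxOverP => i j; rewrite mxE.
by apply: rpred_sum => k _; apply: pidealMr.
Qed.

Lemma mxOver_pidealM q (q' : F) A B : A \is a mxOver (pideal q) ->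
  B \is a mxOver (pideal q') -> A *m B \is a mxOver (pideal (q * q')).
Proof.
move=> /mxOverP Aq /mxOverP Bq; apply/mxOverP => i j; rewrite mxE.
by apply: rpred_sum => k _; apply: pidealM.
Qed.

Lemma mxOver_pideal_scale q (q' : F) A :
  q != 0 -> (q *: A \is a mxOver (pideal (q * q'))) = (A \is a mxOver (pideal q')).
Proof.
move=> q0; apply/mxOverP/mxOverP => qA i j; move: (qA i j);
  by rewrite mxE pideal_scale.
Qed.

Lemma mxOver_pideal_scaler q A : q != 0 -> A \is a mxOver S -> q *: A \is a mxOver (pideal q).
Proof.
by move=> q0 /mxOverP AS; apply/mxOverP => i j; rewrite mxE pideal_mulr.
Qed.

Lemma mxOver_pidealW q (q' : F) A : q' != 0 -> q' \in S ->
  A \is a mxOver (pideal (q * q')) -> A \is a mxOver (pideal q).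
Proof. by move=> q0 qS /mxOverP Aq; apply/mxOverP => i j; apply: pidealW (Aq i j). Qed.

End Matrices.

Lemma mxOver_pidealX n q (A : 'M[F]_n.+1) k :
  A \is a mxOver (pideal q) -> A ^+ k \is a mxOver (pideal (q ^+ k)).
Proof.
move=> Aq; elim: k => [|k IHk]; last by rewrite !exprS mxOver_pidealM.
by rewrite !expr0 mxOver_scalar // pideal1 ?rpred0 ?rpred1.
Qed.

End PrincipalIdeal.

Section Matrix2.
Variable R : nzRingType.
Implicit Types (a b c d e f g h k : R) (S : {pred R}).

Local Ltac mx2_entrywise :=
  apply/matrixP => -[[|[|//]] ?] [[|[|//]] ?]; rewrite !mxE /=.

Lemma mx2_eta (A : 'M[R]_2) :
  A = mx2 (A ord0 ord0) (A ord0 ord_max) (A ord_max ord0) (A ord_max ord_max).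
Proof. by mx2_entrywise; congr (A _ _); apply: val_inj. Qed.

Lemma mxOver_mx2E S a b c d :
  (mx2 a b c d \is a mxOver S) = [&& a \in S, b \in S, c \in S & d \in S].
Proof.
apply/mxOverP/and4P => [S_ | [? ? ? ?] [[|[|//]] ?] [[|[|//]] ?]]; rewrite ?mxE //.
by split; [move: (S_ ord0 ord0)|move: (S_ ord0 ord_max)|move: (S_ ord_max ord0)|
  move: (S_ ord_max ord_max)]; rewrite mxE /=.
Qed.

Lemma mx2D a b c d e f g h :
  mx2 a b c d + mx2 e f g h = mx2 (a + e) (b + f) (c + g) (d + h).
Proof. by mx2_entrywise. Qed.

Lemma mx2N a b c d : - mx2 a b c d = mx2 (- a) (- b) (- c) (- d).
Proof. by mx2_entrywise. Qed.

Lemma mx2Z k a b c d : k *: mx2 a b c d = mx2 (k * a) (k * b) (k * c) (k * d).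
Proof. by mx2_entrywise. Qed.

Lemma mx2Mn a b c d n : mx2 a b c d *+ n = mx2 (a *+ n) (b *+ n) (c *+ n) (d *+ n).
Proof. by mx2_entrywise; rewrite mulmxnE !mxE. Qed.

Lemma scalar_mx2 a : a%:M = mx2 a 0 0 a.
Proof. by mx2_entrywise. Qed.

Lemma mul_mx2 a b c d e f g h :
  mx2 a b c d *m mx2 e f g h =
  mx2 (a * e + b * g) (a * f + b * h) (c * e + d * g) (c * f + d * h).
Proof. by mx2_entrywise; rewrite !big_ord_recl big_ord0 !mxE /= addr0. Qed.

End Matrix2.

Lemma det_mx2 (R : comNzRingType) (a b c d : R) : \det (mx2 a b c d) = a * d - b * c.
Proof.
rewrite (expand_det_row _ ord0) !big_ord_recl big_ord0 /cofactor /=.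
by rewrite !det_mx11 !mxE /=; ring.
Qed.

Lemma invmx2 (R : comUnitRingType) (a b c d : R) :
  a * d - b * c = 1 -> invmx (mx2 a b c d) = mx2 d (- b) (- c) a.
Proof.
move=> det1; have unit : mx2 a b c d \in unitmx by rewrite unitmxE det_mx2 det1 unitr1.
have inverse : mx2 a b c d *m mx2 d (- b) (- c) a = 1%:M.
  by rewrite mul_mx2 scalar_mx2; congr (mx2 _ _ _ _); rewrite -?det1; ring.
by rewrite -[RHS](mulKmx unit) inverse mulmx1.
Qed.

Section Index.
Variable R : realType.
Implicit Types (G K L : 'M[R]_2 -> Prop) (x y : 'M[R]_2).

Lemma index_eq_fintype G K (T : finType) (f : T -> 'M[R]_2) :
  (forall t, G (f t)) -> (forall g, G g -> exists! t, K (invmx (f t) *m g)) ->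
  index_eq G K #|T|.
Proof.
move=> Gf cosetf; exists (f \o enum_val); split=> [i|g /cosetf[t [Kt tu]]]; first exact: Gf.
exists (enum_rank t); split=> [|i /tu ->]; [by rewrite /= enum_rankK|exact: enum_valK].
Qed.

Lemma index_eq_mul G K L a b :
  (forall x, G x -> x \in unitmx) -> (forall x, K x -> G x) -> (forall x, L x -> K x) ->
  (forall x y, G x -> G y -> G (x *m y)) -> (forall x y, K x -> K y -> K (x *m y)) ->
  index_eq G K a -> index_eq K L b -> index_eq G L (a * b).
Proof.
move=> Gunit KG LK Gmul Kmul [f [Gf cosetf]] [h [Kh cosetsh]].
have -> : (a * b)%N = #|{: 'I_a * 'I_b}| by rewrite card_prod !card_ord.
apply: (@index_eq_fintype _ _ _ (fun t => f t.1 *m h t.2)) => [[i j]|g Gg].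
  by apply: Gmul => //; apply: KG.
have invM i j : invmx (f i *m h j) *m g = invmx (h j) *m (invmx (f i) *m g).
  by rewrite mulmxA; congr (_ *m _); apply: invrM; apply: Gunit => //; apply: KG.
have [i [Ki iu]] := cosetf g Gg; have [j [Lj ju]] := cosetsh _ Ki.
exists (i, j); split=> [|[i' j'] /=]; first by rewrite /= invM.
rewrite invM => Lij'.
have Ki' : K (invmx (f i') *m g).
  by rewrite -(mulKVmx (Gunit _ (KG _ (Kh j'))) (invmx (f i') *m g)); apply: Kmul (LK _ _).
by move: Lij'; rewrite -(iu _ Ki') => /ju <-.
Qed.

End Index.

Section GoldenIntegers.
Variable R : realType.
Local Notation lam := (lam R).

Lemma lam_sqr : lam ^+ 2 = lam + 1.
Proof.
rewrite /Defs.lam; set x := pi / 5%:R.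
have pi5x : pi = x *+ 2 + x *+ 3 by rewrite -mulrnDr /x -mulr_natr; field.
have cos3x : cos (x *+ 3) = - cos (x *+ 2).
  have -> : x *+ 3 = pi - x *+ 2 by rewrite {1}pi5x; ring.
  by rewrite cosB cospi sinpi; ring.
have triple : cos (x *+ 3) = 4 * cos x ^+ 3 - 3 * cos x.
  have -> : x *+ 3 = x *+ 2 + x by ring.
  rewrite cosD cos_mulr2n sin_mulr2n.
  have -> : cos x * sin x *+ 2 * sin x = cos x * sin x ^+ 2 *+ 2 by ring.
  by rewrite sin2cos2; ring.
have cosx_gt0 : 0 < cos x.
  by apply: cos_gt0_pihalf; have := pi_gt0 R; rewrite /x; lra.
rewrite cos3x cos_mulr2n in triple.
(* cos x is a root of 4X^3 - 2X^2 - 3X + 1 = (X + 1)(4X^2 - 2X - 1) *)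
have : (cos x + 1) * (4 * cos x ^+ 2 - 2 * cos x - 1) = 0.
  have -> : (cos x + 1) * (4 * cos x ^+ 2 - 2 * cos x - 1) =
    (4 * cos x ^+ 3 - 3 * cos x) - (- (cos x ^+ 2 *+ 2 - 1)) by ring.
  by rewrite -triple subrr.
move/eqP; rewrite mulf_eq0 => /orP[/eqP|/eqP quad]; first by lra.
by apply/eqP; rewrite -subr_eq0 -quad; apply/eqP; ring.
Qed.

Definition Zlam : {pred R} := fun x => `[< inZlam x >].

Lemma ZlamP x : reflect (inZlam x) (x \in Zlam).
Proof. exact: asboolP. Qed.

Fact Zlam_subring : subring_closed Zlam.
Proof.
split.
- by apply/ZlamP; exists 1, 0; rewrite mul0r addr0.
- move=> _ _ /ZlamP[a [b ->]] /ZlamP[c [d ->]]; apply/ZlamP.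
  by exists (a - c), (b - d); rewrite !rmorphB /=; ring.
- move=> _ _ /ZlamP[a [b ->]] /ZlamP[c [d ->]]; apply/ZlamP.
  exists (a * c + b * d), (a * d + b * c + b * d).
  rewrite !rmorphD !rmorphM /=.
  have -> : (a%:~R + b%:~R * lam) * (c%:~R + d%:~R * lam) = a%:~R * c%:~R
      + (a%:~R * d%:~R + b%:~R * c%:~R) * lam + b%:~R * d%:~R * lam ^+ 2 :> R by ring.
  by rewrite lam_sqr; ring.
Qed.

HB.instance Definition _ := GRing.isSubringClosed.Build R Zlam Zlam_subring.

Lemma Zlam_lam : lam \in Zlam.
Proof. by apply/ZlamP; exists 0, 1; rewrite mul1r add0r. Qed.

Lemma Zlam_int (a b : int) : a%:~R + b%:~R * lam \in Zlam.
Proof. by apply/ZlamP; exists a, b. Qed.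

Lemma lam_indep (a b : int) : a%:~R + b%:~R * lam = 0 :> R -> a = 0 /\ b = 0.
Proof.
move=> h.
have ea : a%:~R = - (b%:~R * lam) :> R by rewrite -[RHS]add0r -h addrK.
have : (a * a + a * b - b * b)%:~R = 0 :> R.
  rewrite !rmorphB !rmorphD !rmorphM /= ea.
  transitivity (b%:~R * b%:~R * (lam ^+ 2 - lam - 1) : R); first ring.
  by rewrite lam_sqr; ring.
move/eqP; rewrite intr_eq0 => /eqP/golden_form_eq0 b0; split=> //.
by move: ea; rewrite b0 mul0r oppr0 => /eqP; rewrite intr_eq0 => /eqP.
Qed.

End GoldenIntegers.

Section HeckeGroup.
Variable R : realType.
Local Notation Zlam := (@Zlam R).
Implicit Types (A B f g : 'M[R]_2) (q r : R).

Lemma H5_mxOver_det A : H5 A -> A \is a mxOver Zlam /\ \det A = 1.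
Proof.
elim=> {A} [||| A B _ [AZ detA] _ [BZ detB] | A _ [AZ detA]].
- by rewrite mxOver_scalar ?rpred0 ?rpred1 // det1.
- by rewrite det_mx2 mxOver_mx2E rpredN rpred0 rpred1; split=> //; ring.
- by rewrite det_mx2 mxOver_mx2E rpred0 rpred1 Zlam_lam; split=> //; ring.
- by rewrite mxOverM ?det_mulmx ?detA ?detB ?mulr1.
rewrite det_inv detA invr1 (mx2_eta A) invmx2; last by rewrite -det_mx2 -mx2_eta.
by split=> //; move: AZ; rewrite {1}(mx2_eta A) !mxOver_mx2E !rpredN => /and4P[-> -> -> ->].
Qed.

Lemma H5_mxOver A : H5 A -> A \is a mxOver Zlam.
Proof. by case/H5_mxOver_det. Qed.

Lemma H5_unitmx A : H5 A -> A \in unitmx.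
Proof. by case/H5_mxOver_det => _ detA; rewrite unitmxE detA unitr1. Qed.

Lemma H5X A k : H5 A -> H5 (A ^+ k).
Proof.
move=> HA; elim: k => [|k IHk]; first exact: H5_one.
by rewrite exprS; apply: H5_mul.
Qed.

Lemma inIdealE q x : q != 0 -> inIdeal q x = (x \in pideal Zlam q).
Proof.
move=> q0; rewrite propeqE; split=> [[y [/ZlamP Zy ->]]|Iqx]; first by rewrite pideal_mulr.
by exists (q^-1 * x); rewrite mulVKf //; split=> //; apply/ZlamP.
Qed.

Lemma congmxE q A B : q != 0 -> congmx q A B <-> A - B \is a mxOver (pideal Zlam q).
Proof.
move=> q0; rewrite /congmx; split=> [AB|/mxOverP AB i j].
  by apply/mxOverP => i j; rewrite !mxE -inIdealE.
by move: (AB i j); rewrite !mxE -inIdealE.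
Qed.

Lemma HcongE q A :
  q != 0 -> Hcong q A <-> H5 A /\ A - 1%:M \is a mxOver (pideal Zlam q).
Proof.
move=> q0; rewrite /Hcong /e11 /e12 /e21 /e22 !inIdealE // (mx2_eta (A - 1%:M)).
rewrite mxOver_mx2E !mxE /= !subr0.
by split=> [[? ? ? ? ?]|[? /and4P[]]]; split=> //; apply/and4P.
Qed.

Lemma Hcong_coset q f g : q != 0 -> H5 f -> H5 g ->
  Hcong q (invmx f *m g) <-> g - f \is a mxOver (pideal Zlam q).
Proof.
move=> q0 Hf Hg; have Uf := H5_unitmx Hf.
rewrite HcongE //.
have -> : invmx f *m g - 1%:M = invmx f *m (g - f) by rewrite mulmxBr mulVmx.
split=> [[_ If]|Ifg]; last first.
  split; first exact: H5_mul (H5_inv Hf) Hg.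
  exact: mxOver_pidealMl (H5_mxOver (H5_inv Hf)) Ifg.
by rewrite -(mulKVmx Uf (g - f)); exact: mxOver_pidealMl (H5_mxOver Hf) If.
Qed.

Lemma Hcong_mul q A B : q != 0 -> Hcong q A -> Hcong q B -> Hcong q (A *m B).
Proof.
move=> q0 /(HcongE _ q0)[HA IA] /(HcongE _ q0)[HB IB]; apply/HcongE => //.
have -> : A *m B - 1%:M = (A - 1%:M) *m B + (B - 1%:M) by rewrite mulmxBl mul1mx addrA subrK.
by split; [exact: H5_mul | rewrite rpredD // mxOver_pidealMr // H5_mxOver].
Qed.

Lemma HcongW q r A : q != 0 -> r != 0 -> r \in Zlam -> Hcong (q * r) A -> Hcong q A.
Proof.
move=> q0 r0 Zr /HcongE[|HA IA]; first by rewrite mulf_neq0.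
by apply/HcongE => //; split; last exact: mxOver_pidealW IA.
Qed.

End HeckeGroup.

Section Tangents.
Variables (R : realType) (p : nat).
Hypothesis p_gt0 : (0 < p)%N.
Local Notation Zlam := (@Zlam R).
Local Notation P := (p%:R : R).
Implicit Types (g G H B C U : 'M[R]_2) (n : nat).

Lemma P_neq0 : P != 0.
Proof. by rewrite pnatr_eq0 -lt0n. Qed.

Lemma Pexp_neq0 n : P ^+ n != 0.
Proof. exact: expf_neq0 P_neq0. Qed.

Lemma Zlam_Pexp n : P ^+ n \in Zlam.
Proof. by rewrite rpredX ?rpred_nat. Qed.

Lemma mxOver_PexpW m n U : (m <= n)%N ->
  U \is a mxOver (pideal Zlam (P ^+ n)) -> U \is a mxOver (pideal Zlam (P ^+ m)).
Proof.
by move=> mn; rewrite -(subnKC mn) exprD; apply: mxOver_pidealW (Pexp_neq0 _) (Zlam_Pexp _).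
Qed.

Definition tangent n G B := [/\ H5 G, B \is a mxOver Zlam &
  G - 1%:M - P ^+ n *: B \is a mxOver (pideal Zlam (P ^+ n.+1))].

Lemma tangent_sub1 n G B : tangent n G B -> G - 1%:M \is a mxOver (pideal Zlam (P ^+ n)).
Proof.
case=> _ ZB IG; rewrite -[G - 1%:M](subrK (P ^+ n *: B)) rpredD //.
  exact: mxOver_PexpW IG.
by rewrite mxOver_pideal_scaler ?Pexp_neq0.
Qed.

Lemma tangent_Hcong n G B : tangent n G B -> Hcong (P ^+ n) G.
Proof.
by move=> tG; apply/(HcongE _ (Pexp_neq0 n)); split; [case: tG | apply: tangent_sub1 tG].
Qed.

Lemma tangent1 n : tangent n 1%:M 0.
Proof. by split; rewrite ?rpred0 ?scaler0 ?subr0 ?subrr ?rpred0 //; exact: H5_one. Qed.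

Lemma tangentM n G H B C : (0 < n)%N ->
  tangent n G B -> tangent n H C -> tangent n (G *m H) (B + C).
Proof.
move=> n_gt0 tG tH; have IG := tangent_sub1 tG; have IH := tangent_sub1 tH.
case: tG tH => [HG ZB IGB] [HH ZC IHC]; split; [exact: H5_mul | exact: rpredD |].
have -> : G *m H - 1%:M - P ^+ n *: (B + C) =
    (G - 1%:M - P ^+ n *: B) + (H - 1%:M - P ^+ n *: C) + (G - 1%:M) *m (H - 1%:M).
  rewrite mulmxBl mulmxBr !mul1mx mulmx1 scalerDr.
  by move: (G *m H) => GH; apply/matrixP => i j; rewrite !mxE; ring.
apply: rpredD; first exact: rpredD.
apply: (@mxOver_PexpW _ (n + n)); first by rewrite -addn1 leq_add2l.
by rewrite exprD; exact: mxOver_pidealM.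
Qed.

Lemma tangentX n G B k : (0 < n)%N -> tangent n G B -> tangent n (G ^+ k) (B *+ k).
Proof.
move=> n_gt0 tG; elim: k => [|k IHk]; first by rewrite expr0 mulr0n; exact: tangent1.
by rewrite exprS mulrS; apply: tangentM.
Qed.

Lemma tangent_conj n g G B : H5 g ->
  tangent n G B -> tangent n (g *m G *m invmx g) (g *m B *m invmx g).
Proof.
move=> Hg [HG ZB IG]; have Zg := H5_mxOver Hg; have Zg' := H5_mxOver (H5_inv Hg).
split; first by apply: H5_mul (H5_inv Hg); apply: H5_mul.
  by rewrite mxOverM // mxOverM.
have -> : g *m G *m invmx g - 1%:M - P ^+ n *: (g *m B *m invmx g) =
    g *m (G - 1%:M - P ^+ n *: B) *m invmx g.
  by rewrite !mulmxBr !mulmxBl mulmx1 mulmxV ?H5_unitmx // -scalemxAr -scalemxAl.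
by rewrite mxOver_pidealMr // mxOver_pidealMl.
Qed.

Lemma tangent_congr n G B C : tangent n G B -> C \is a mxOver Zlam ->
  B - C \is a mxOver (pideal Zlam P) -> tangent n G C.
Proof.
move=> [HG ZB IG] ZC IBC; split=> //.
have -> : G - 1%:M - P ^+ n *: C = (G - 1%:M - P ^+ n *: B) + P ^+ n *: (B - C).
  by rewrite scalerBr addrA subrK.
by rewrite rpredD // exprSr mxOver_pideal_scale ?Pexp_neq0.
Qed.

End Tangents.

Lemma tangent_E12 (R : realType) (p : nat) (sigma : 'M[R]_2) : (0 < p)%N ->
  Hcong (p%:R : R) sigma -> congmx ((p%:R : R) ^+ 2) sigma (mx2 1 p%:R 0 1) ->
  tangent p 1 sigma (mx2 0 1 0 0).
Proof.
move=> p_gt0 /(HcongE _ (P_neq0 R p_gt0))[Hs _] /(congmxE _ _ (Pexp_neq0 R p_gt0 2)) Is.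
split=> //; first by rewrite mxOver_mx2E rpred0 rpred1.
suff -> : sigma - 1%:M - (p%:R : R) ^+ 1 *: mx2 0 1 0 0 = sigma - mx2 1 p%:R 0 1 by [].
by rewrite -addrA -opprD scalar_mx2 mx2Z mx2D; congr (_ - mx2 _ _ _ _); ring.
Qed.

Lemma odd_prime_gt2 p : prime p -> odd p -> (2 < p)%N.
Proof. by move=> /prime_gt1; case: p => [|[|[|]]]. Qed.

Section Lifting.
Variables (R : realType) (p : nat).
Hypotheses (p_prime : prime p) (p_odd : odd p).
Local Notation Zlam := (@Zlam R).
Local Notation P := (p%:R : R).
Let p_gt0 := prime_gt0 p_prime.
Let p_gt2 := odd_prime_gt2 p_prime p_odd.
Implicit Types (G B U : 'M[R]_2).

Lemma mxOver_binomial_term n U k : (0 < n)%N -> (2 <= k <= p)%N ->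
  U \is a mxOver (pideal Zlam (P ^+ n)) ->
  U ^+ k *+ 'C(p, k) \is a mxOver (pideal Zlam (P ^+ n.+2)).
Proof.
move=> n_gt0 /andP[k_ge2 k_lep] IU.
have IUk : U ^+ k \is a mxOver (pideal Zlam (P ^+ (n * k))) by rewrite exprM mxOver_pidealX.
have [k_ltp|k_gep] := ltnP k p; last first.
  have k_eqp : k = p by apply/eqP; rewrite eqn_leq k_lep.
  rewrite k_eqp in IUk *; rewrite binn mulr1n.
  apply: (mxOver_PexpW p_gt0 _ IUk); have := p_gt2; clear -n_gt0; nia.
have /dvdnP[m ->] : (p %| 'C(p, k))%N by rewrite prime_dvd_bin // k_ltp (leq_trans _ k_ge2).
have -> : U ^+ k *+ (m * p) = P *: (U ^+ k *+ m) by rewrite scaler_nat mulrnA.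
rewrite exprS mxOver_pideal_scale ?(P_neq0 _ p_gt0) // rpredMn //.
by apply: (mxOver_PexpW p_gt0 _ IUk); clear -n_gt0 k_ge2; nia.
Qed.

Lemma tangent_expp n G B : (0 < n)%N -> tangent p n G B -> tangent p n.+1 (G ^+ p) B.
Proof.
move=> n_gt0 tG; have IU := tangent_sub1 p_gt0 tG.
case: tG => HG ZB IG; split; [exact: H5X | exact: ZB |].
move: IU IG; set U := G - 1%:M => IU IG; have -> : G = U + 1 by rewrite /U subrK.
rewrite exprD1n [p.+1](_ : _ = p.-2.+3); last by case: p p_gt2 => [|[|]].
rewrite 2!big_ord_recl /= expr0 bin0 expr1 bin1 mulr1n.
set S := \sum_(i < _) _.
have -> : 1 + (U *+ p + S) - 1%:M - P ^+ n.+1 *: B = P *: (U - P ^+ n *: B) + S.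
  rewrite scalerBr scalerA -exprS scaler_nat.
  by move: (U *+ p) S => pU S; apply/matrixP => i j; rewrite !mxE; ring.
rewrite rpredD //; first by rewrite exprS mxOver_pideal_scale ?(P_neq0 _ p_gt0).
apply: rpred_sum => i _; apply: mxOver_binomial_term => //.
by rewrite /bump /=; have := ltn_ord i; have := p_gt2; clear; lia.
Qed.

End Lifting.

Section TangentSpace.
Variables (R : realType) (p n : nat).
Hypotheses (p_gt0 : (0 < p)%N) (n_gt0 : (0 < n)%N).
Local Notation Zlam := (@Zlam R).
Local Notation P := (p%:R : R).
Implicit Types (g B C : 'M[R]_2).

Definition tangents B := exists G, tangent p n G B.

Lemma tangents_mxOver B : tangents B -> B \is a mxOver Zlam.
Proof. by case=> G []. Qed.

Lemma tangentsD B C : tangents B -> tangents C -> tangents (B + C).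
Proof. by move=> [G tG] [H tH]; exists (G *m H); apply: tangentM. Qed.

Lemma tangentsMn B k : tangents B -> tangents (B *+ k).
Proof. by move=> [G tG]; exists (G ^+ k); apply: tangentX. Qed.

Lemma tangents_conj g B : H5 g -> tangents B -> tangents (g *m B *m invmx g).
Proof. by move=> Hg [G tG]; exists (g *m G *m invmx g); apply: tangent_conj. Qed.

Lemma tangents_congr B C : tangents B -> C \is a mxOver Zlam ->
  B - C \is a mxOver (pideal Zlam P) -> tangents C.
Proof. by move=> [G tG] ZC IBC; exists G; apply: tangent_congr tG ZC IBC. Qed.

(* -B is congruent to (p - 1) B modulo p. *)
Lemma tangentsN B : tangents B -> tangents (- B).
Proof.
move=> tB; apply: tangents_congr (tangentsMn p.-1 tB) _ _.
  by rewrite rpredN tangents_mxOver.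
rewrite opprK -mulrSr prednK // -scaler_nat.
by rewrite mxOver_pideal_scaler ?P_neq0 ?tangents_mxOver.
Qed.

Lemma tangentsZ (k : int) B : tangents B -> tangents (k%:~R *: B).
Proof.
move=> tB; case: k => k; first by rewrite scaler_nat; apply: tangentsMn.
by rewrite NegzE rmorphN scaleNr scaler_nat; apply/tangentsN/tangentsMn.
Qed.

End TangentSpace.

Lemma tangents_E12 (R : realType) (p n : nat) (sigma : 'M[R]_2) : prime p -> odd p ->
  (0 < n)%N -> Hcong (p%:R : R) sigma -> congmx ((p%:R : R) ^+ 2) sigma (mx2 1 p%:R 0 1) ->
  tangents p n (mx2 0 1 0 0 : 'M[R]_2).
Proof.
move=> p_prime p_odd + Hsigma sigma_p2; elim: n => [//|[|n] IHn] _.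
  by exists sigma; apply: tangent_E12 (prime_gt0 p_prime) Hsigma sigma_p2.
by have [G tG] := IHn isT; exists (G ^+ p); apply: tangent_expp.
Qed.

Section TangentsSl2.
Variables (R : realType) (p n : nat).
Hypotheses (p_odd : odd p) (n_gt0 : (0 < n)%N).
Local Notation lam := (lam R).
Local Notation Zlam := (@Zlam R).
Local Notation tangents := (@tangents R p n).
Let p_gt0 : (0 < p)%N := odd_gt0 p_odd.

Local Ltac mx2_ring_with eq :=
  rewrite /Smx /Tmx ?(mul_mx2, mx2N, mx2D, mx2Mn, mx2Z); congr (mx2 _ _ _ _); ring: eq.

Lemma tangents_sl2_basis : tangents (mx2 0 1 0 0) ->
  [/\ tangents (mx2 0 lam 0 0), tangents (mx2 0 0 1 0), tangents (mx2 0 0 lam 0),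
      tangents (mx2 1 0 0 (-1)) & tangents (mx2 lam 0 0 (- lam))].
Proof.
move=> tE12; have lam2 : lam * lam = lam + 1 by rewrite -expr2 lam_sqr.
have tD B C : tangents B -> tangents C -> tangents (B + C) by apply: tangentsD.
have tN B : tangents B -> tangents (- B) by apply: tangentsN.
have invS : invmx (Smx R) = mx2 0 (-1) 1 0 by rewrite invmx2 ?opprK ?oppr0 //; ring.
have invT : invmx (Tmx R) = mx2 1 (- lam) 0 1 by rewrite invmx2 ?oppr0 //; ring.
have conjS B : tangents B -> tangents (Smx R *m B *m mx2 0 (-1) 1 0).
  by rewrite -invS; apply: tangents_conj (H5_S R).
have conjT B : tangents B -> tangents (Tmx R *m B *m mx2 1 (- lam) 0 1).
  by rewrite -invT; apply: tangents_conj (H5_T R).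
have tE21 : tangents (mx2 0 0 1 0).
  suff -> : mx2 0 0 1 0 = - (Smx R *m mx2 0 1 0 0 *m mx2 0 (-1) 1 0) by apply/tN/conjS.
  by mx2_ring_with lam2.
pose A := mx2 lam (- (lam * lam)) 0 (- lam).
have tA : tangents A.
  suff -> : A = Tmx R *m mx2 0 0 1 0 *m mx2 1 (- lam) 0 1 + - mx2 0 0 1 0.
    by apply/tD/tN/tE21/conjT.
  by mx2_ring_with lam2.
have tlam2E12 : tangents (mx2 0 (lam * lam) 0 0).
  pose D := Tmx R *m A *m mx2 1 (- lam) 0 1 + - A.
  have tD2 : tangents ((p./2)%:R *: D) by rewrite scaler_nat; apply/tangentsMn/tD/tN/tA/conjT.
  apply: tangents_congr tD2 _ _ => //; first by rewrite mxOver_mx2E !rpred0 rpredM ?Zlam_lam.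
  (* p./2 copies of -2 lam^2 E12 differ from lam^2 E12 by p times -lam^2 E12. *)
  have p_half : (p%:R : R) = 1 + (p./2)%:R * 2.
    by rewrite -[in LHS](odd_double_half p) p_odd natrD -muln2 natrM.
  have -> : (p./2)%:R *: D - mx2 0 (lam * lam) 0 0 = p%:R *: mx2 0 (- (lam * lam)) 0 0.
    by rewrite /D /A; mx2_ring_with p_half.
  by rewrite mxOver_pideal_scaler ?P_neq0 // mxOver_mx2E rpredN rpredM ?rpred0 ?Zlam_lam.
have tlamE12 : tangents (mx2 0 lam 0 0).
  suff -> : mx2 0 lam 0 0 = mx2 0 (lam * lam) 0 0 + - mx2 0 1 0 0 by apply/tD/tN.
  by mx2_ring_with lam2.
have tlamE21 : tangents (mx2 0 0 lam 0).
  suff -> : mx2 0 0 lam 0 = - (Smx R *m mx2 0 lam 0 0 *m mx2 0 (-1) 1 0) by apply/tN/conjS.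
  by mx2_ring_with lam2.
have tlamH : tangents (mx2 lam 0 0 (- lam)).
  suff -> : mx2 lam 0 0 (- lam) = A + mx2 0 (lam * lam) 0 0 by apply: tD.
  by rewrite /A; mx2_ring_with lam2.
split=> //.
suff -> : mx2 1 0 0 (-1) = Tmx R *m mx2 0 0 lam 0 *m mx2 1 (- lam) 0 1 + - mx2 0 0 lam 0
    + (mx2 0 lam 0 0 *+ 2 + mx2 0 1 0 0) + - mx2 lam 0 0 (- lam).
  have tX := tD _ _ (conjT _ tlamE21) (tN _ tlamE21).
  have tY := tD _ _ (tangentsMn p_gt0 n_gt0 2 tlamE12) tE12.
  exact: tD _ _ (tD _ _ tX tY) (tN _ tlamH).
by mx2_ring_with lam2.
Qed.

Lemma tangents_sl2 x y z : tangents (mx2 0 1 0 0) ->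
  x \in Zlam -> y \in Zlam -> z \in Zlam -> tangents (mx2 x y z (- x)).
Proof.
move=> /[dup] tE12 /tangents_sl2_basis[tlamE12 tE21 tlamE21 tH tlamH].
move=> /ZlamP[a [b ->]] /ZlamP[c [d ->]] /ZlamP[e [f ->]].
have tZ (k : int) B : tangents B -> tangents (k%:~R *: B) by apply: tangentsZ.
have tD B C : tangents B -> tangents C -> tangents (B + C) by apply: tangentsD.
suff -> : mx2 (a%:~R + b%:~R * lam) (c%:~R + d%:~R * lam) (e%:~R + f%:~R * lam)
    (- (a%:~R + b%:~R * lam)) = a%:~R *: mx2 1 0 0 (-1) + b%:~R *: mx2 lam 0 0 (- lam)
    + (c%:~R *: mx2 0 1 0 0 + d%:~R *: mx2 0 lam 0 0)
    + (e%:~R *: mx2 0 0 1 0 + f%:~R *: mx2 0 0 lam 0).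
  by apply: (tD); [apply: (tD); apply: (tD)|apply: (tD)]; apply: (tZ).
by rewrite ?(mx2Z, mx2D); congr (mx2 _ _ _ _); ring.
Qed.

End TangentsSl2.

Lemma int_cong_small (p u v : nat) (c : int) :
  (u < p)%N -> (v < p)%N -> u%:Z - v%:Z = p%:Z * c -> u = v.
Proof.
move=> up vp uvc; have [c_lt0|c_gt0|c0] := ltrgtP c 0; last by rewrite c0 mulr0 in uvc; lia.
- have : (p%:Z * c <= - p%:Z)%R by nia.
  lia.
- have : (p%:Z <= p%:Z * c)%R by nia.
  lia.
Qed.

Section Residues.
Variables (R : realType) (p : nat).
Hypothesis p_gt0 : (0 < p)%N.
Local Notation Zlam := (@Zlam R).
Local Notation lam := (lam R).
Local Notation P := (p%:R : R).

Definition lamres (uv : 'I_p * 'I_p) : R := uv.1%:R + uv.2%:R * lam.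

Lemma Zlam_lamres uv : lamres uv \in Zlam.
Proof. by apply/ZlamP; exists uv.1, uv.2. Qed.

Lemma lamres_exists x : x \in Zlam -> exists uv, x - lamres uv \in pideal Zlam P.
Proof.
move=> /ZlamP[a [b ->]]; have p0 : p%:Z != 0 by rewrite eqz_nat -lt0n.
have res_lt (z : int) : (absz (z %% p)%Z < p)%N.
  by have := ltz_pmod z (p_gt0 : 0 < p%:Z); have := modz_ge0 z p0; lia.
have res_nat (z : int) : (absz (z %% p)%Z)%:R = (z %% p)%Z%:~R :> R.
  by rewrite -[LHS]/((absz (z %% p)%Z)%:Z%:~R) abszE ger0_norm ?modz_ge0.
exists (Ordinal (res_lt a), Ordinal (res_lt b)); rewrite /lamres /= !res_nat.
have -> : a%:~R + b%:~R * lam - ((a %% p)%Z%:~R + (b %% p)%Z%:~R * lam) =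
    P * ((a %/ p)%Z%:~R + (b %/ p)%Z%:~R * lam).
  by rewrite {1}(divz_eq a p) {1}(divz_eq b p) !rmorphD !rmorphM /=; ring.
by rewrite pideal_mulr ?P_neq0 ?Zlam_int.
Qed.

Lemma lamres_inj uv uv' : lamres uv - lamres uv' \in pideal Zlam P -> uv = uv'.
Proof.
case: uv uv' => u v [u' v']; rewrite pidealE => /ZlamP[c [d cd]].
have : ((u : nat)%:Z - (u' : nat)%:Z - p%:Z * c)%:~R
    + ((v : nat)%:Z - (v' : nat)%:Z - p%:Z * d)%:~R * lam = 0 :> R.
  have diff : lamres (u, v) - lamres (u', v') = P * (c%:~R + d%:~R * lam).
    by rewrite -cd mulVKf ?P_neq0.
  rewrite !rmorphB !rmorphM /=.
  transitivity (lamres (u, v) - lamres (u', v') - P * (c%:~R + d%:~R * lam)).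
    by rewrite /lamres /=; ring.
  by rewrite diff subrr.
move=> /lam_indep[/eqP]; rewrite subr_eq0 => /eqP/int_cong_small eq_u.
move=> /eqP; rewrite subr_eq0 => /eqP/int_cong_small eq_v.
by congr (_, _); apply: val_inj; [apply: eq_u | apply: eq_v].
Qed.

End Residues.

Lemma trace_det1_scale (F : fieldType) (c : F) (Y : 'M[F]_2) : c != 0 ->
  \det (1%:M + c *: Y) = 1 -> Y ord0 ord0 + Y ord_max ord_max = - (c * \det Y).
Proof.
move=> c0; rewrite scalar_mx2 (mx2_eta Y) mx2Z mx2D !det_mx2 !mxE /= => /eqP.
rewrite -subr_eq0 => /eqP det1.
by apply: (mulfI c0); rewrite -[RHS]addr0 -det1; ring.
Qed.

Section ResidueMatrices.
Variables (R : realType) (p : nat).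
Hypothesis p_gt0 : (0 < p)%N.
Local Notation Zlam := (@Zlam R).
Local Notation P := (p%:R : R).
Local Notation residue := ('I_p * 'I_p)%type.
Local Notation lamres := (@lamres R p).
Implicit Types (A Y : 'M[R]_2).

Lemma lamres_uniq x uv uv' :
  x - lamres uv \in pideal Zlam P -> x - lamres uv' \in pideal Zlam P -> uv = uv'.
Proof.
move=> xuv xuv'; apply: (@lamres_inj R _ p_gt0).
have -> : lamres uv - lamres uv' = (x - lamres uv') - (x - lamres uv) by ring.
exact: rpredB.
Qed.

Definition mxres (r : {ffun 'I_2 * 'I_2 -> residue}) : 'M[R]_2 :=
  \matrix_(i, j) lamres (r (i, j)).

Lemma mxres_exists_uniq A : A \is a mxOver Zlam ->
  exists! r, A - mxres r \is a mxOver (pideal Zlam P).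
Proof.
move=> /mxOverP ZA; pose r_ (i : 'I_2 * 'I_2) := cid (lamres_exists p_gt0 (ZA i.1 i.2)).
exists [ffun i => sval (r_ i)]; split=> [|r' /mxOverP Ar'].
  by apply/mxOverP => i j; rewrite !mxE ffunE; exact: svalP (r_ (i, j)).
apply/ffunP => -[i j]; rewrite ffunE; apply: lamres_uniq (svalP (r_ (i, j))) _.
by move: (Ar' i j); rewrite !mxE.
Qed.

Definition sl2res (t : residue * residue * residue) : 'M[R]_2 :=
  mx2 (lamres t.1.1) (lamres t.1.2) (lamres t.2) (- lamres t.1.1).

Lemma sl2res_exists_uniq Y : Y \is a mxOver Zlam ->
  Y ord0 ord0 + Y ord_max ord_max \in pideal Zlam P ->
  exists! t, Y - sl2res t \is a mxOver (pideal Zlam P).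
Proof.
move=> /mxOverP ZY trY.
have [a Ya] := lamres_exists p_gt0 (ZY ord0 ord0).
have [b Yb] := lamres_exists p_gt0 (ZY ord0 ord_max).
have [c Yc] := lamres_exists p_gt0 (ZY ord_max ord0).
have resE t : (Y - sl2res t \is a mxOver (pideal Zlam P)) =
    [&& Y ord0 ord0 - lamres t.1.1 \in pideal Zlam P,
        Y ord0 ord_max - lamres t.1.2 \in pideal Zlam P,
        Y ord_max ord0 - lamres t.2 \in pideal Zlam P
      & Y ord_max ord_max + lamres t.1.1 \in pideal Zlam P].
  by rewrite {1}[Y]mx2_eta /sl2res mx2N mx2D mxOver_mx2E opprK.
have trE x : (Y ord_max ord_max + x \in pideal Zlam P) = (Y ord0 ord0 - x \in pideal Zlam P).
  suff -> : Y ord_max ord_max + x = (Y ord0 ord0 + Y ord_max ord_max) - (Y ord0 ord0 - x).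
    by rewrite rpredBl.
  by ring.
exists (a, b, c); split=> [|[[a' b'] c']]; first by rewrite resE trE Ya Yb Yc.
rewrite resE trE /= => /and4P[Ya' Yb' Yc' _].
by rewrite (lamres_uniq Ya Ya') (lamres_uniq Yb Yb') (lamres_uniq Yc Yc').
Qed.

End ResidueMatrices.

Section CongruenceIndex.
Variables (R : realType) (p : nat).
Hypothesis p_odd : odd p.
Local Notation Zlam := (@Zlam R).
Local Notation P := (p%:R : R).
Local Notation residue := ('I_p * 'I_p)%type.
Local Notation sl2res := (@sl2res R p).
Let p_gt0 : (0 < p)%N := odd_gt0 p_odd.
Implicit Types (F g B : 'M[R]_2).

Definition deviation n g := (P ^+ n)^-1 *: (g - 1%:M).

Lemma deviation_mxOver n g : Hcong (P ^+ n) g -> deviation n g \is a mxOver Zlam.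
Proof.
move=> /(HcongE _ (Pexp_neq0 _ p_gt0 n))[_ /mxOverP Ig].
by apply/mxOverP => i j; rewrite mxE -pidealE.
Qed.

Lemma deviation_trace n g : (0 < n)%N -> Hcong (P ^+ n) g ->
  deviation n g ord0 ord0 + deviation n g ord_max ord_max \in pideal Zlam P.
Proof.
move=> n_gt0 Hg; have /mxOverP ZY := deviation_mxOver Hg.
have [/H5_mxOver_det[_ detg] _] := (HcongE _ (Pexp_neq0 _ p_gt0 n)).1 Hg.
rewrite (trace_det1_scale (Pexp_neq0 _ p_gt0 n)); last first.
  by rewrite /deviation scalerKV ?Pexp_neq0 // addrC subrK.
have -> : P ^+ n = P * P ^+ n.-1 by rewrite -exprS prednK.
rewrite rpredN -mulrA pideal_mulr ?P_neq0 // rpredM ?Zlam_Pexp //.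
by rewrite (mx2_eta (deviation n g)) det_mx2 rpredB ?rpredM.
Qed.

Lemma tangent_coset n F B g : tangent p n F B -> H5 g ->
  Hcong (P ^+ n.+1) (invmx F *m g) <-> deviation n g - B \is a mxOver (pideal Zlam P).
Proof.
move=> [HF ZB IF] Hg; rewrite Hcong_coset ?Pexp_neq0 //.
have -> : g - F = P ^+ n *: (deviation n g - B) - (F - 1%:M - P ^+ n *: B).
  rewrite scalerBr /deviation scalerKV ?Pexp_neq0 //.
  by apply/matrixP => i j; rewrite !mxE; ring.
by rewrite rpredBr // exprSr mxOver_pideal_scale ?Pexp_neq0.
Qed.

Lemma index_Hcong_succ n : (0 < n)%N -> tangents p n (mx2 0 1 0 0 : 'M[R]_2) ->
  index_eq (Hcong (P ^+ n)) (Hcong (P ^+ n.+1)) (p ^ 6).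
Proof.
move=> n_gt0 tE12.
have tB t : tangents p n (sl2res t).
  by apply: tangents_sl2; rewrite ?rpredN ?Zlam_lamres.
pose F t := sval (cid (tB t)); have tF t : tangent p n (F t) (sl2res t) := svalP (cid (tB t)).
have -> : (p ^ 6)%N = #|{: residue * residue * residue}|.
  by rewrite !card_prod card_ord !expnS expn0 muln1 !mulnA.
apply: (index_eq_fintype (f := F)) => [t|g Hg]; first exact: tangent_Hcong (tF t).
have [HG _] := (HcongE _ (Pexp_neq0 _ p_gt0 n)).1 Hg.
have [t [Yt t_uniq]] :=
  sl2res_exists_uniq p_gt0 (deviation_mxOver Hg) (deviation_trace n_gt0 Hg).
exists t; split=> [|t' /(tangent_coset (tF t') HG) Yt']; first exact/(tangent_coset (tF t) HG).
exact: t_uniq.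
Qed.

End CongruenceIndex.

Lemma index_H5_Hcong (R : realType) (p : nat) : (0 < p)%N ->
  exists k, index_eq (@H5 R) (Hcong (p%:R : R)) k.
Proof.
move=> p_gt0; have P0 := P_neq0 R p_gt0.
pose reps r := exists A, H5 A /\ A - @mxres R p r \is a mxOver (pideal (@Zlam R) p%:R).
pose S := [set r | `[< reps r >]]; exists #|S|.
have rep (i : 'I_#|S|) : reps (enum_val i).
  by have := enum_valP i; rewrite inE => /asboolP.
pose f i := sval (cid (rep i)).
have Hf i : H5 (f i) by case: (svalP (cid (rep i))).
have fr i : f i - @mxres R p (enum_val i) \is a mxOver (pideal (@Zlam R) p%:R).
  by case: (svalP (cid (rep i))).
rewrite -[X in index_eq _ _ X]card_ord; apply: (index_eq_fintype (f := f)) => // g Hg.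
have [r [gr r_uniq]] := mxres_exists_uniq p_gt0 (H5_mxOver Hg).
have rS : r \in S by rewrite inE; apply/asboolP; exists g.
exists (enum_rank_in rS r); split=> [|i /(Hcong_coset P0 (Hf i) Hg) gf].
  apply/(Hcong_coset P0 (Hf _) Hg); set fr_ := f _.
  have := fr (enum_rank_in rS r); rewrite enum_rankK_in // => fr'.
  have -> : g - fr_ = (g - @mxres R p r) - (fr_ - @mxres R p r) by rewrite opprB addrA subrK.
  exact: rpredB.
apply: enum_val_inj; rewrite enum_rankK_in //; apply: r_uniq.
by rewrite -(subrK (f i) g) -addrA rpredD.
Qed.

Lemma index_H5_Hcong_pow (R : realType) (p c k : nat) : (0 < p)%N ->
  index_eq (@H5 R) (Hcong (p%:R : R)) k ->
  (forall n, (0 < n)%N -> index_eq (Hcong ((p%:R : R) ^+ n)) (Hcong ((p%:R : R) ^+ n.+1)) c) ->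
  forall n, (0 < n)%N -> index_eq (@H5 R) (Hcong ((p%:R : R) ^+ n)) (c ^ n.-1 * k).
Proof.
move=> p_gt0 H5_Hp index_step; elim=> [//|[|n] IHn] _; first by rewrite mul1n expr1.
rewrite expnSr mulnAC; apply: (index_eq_mul _ _ _ _ _ (IHn isT) (index_step n.+1 isT)).
- exact: H5_unitmx.
- by move=> x [].
- move=> x; rewrite exprSr; apply: HcongW; [exact: Pexp_neq0 | exact: P_neq0 | exact: rpred_nat].
- by move=> x y; apply: H5_mul.
- by move=> x y; apply: Hcong_mul; exact: Pexp_neq0.
Qed.

Theorem proposition4p3 (R : realType) (p : nat) :
  prime p -> odd p ->
  (exists sigma : 'M[R]_2,
      Hcong (p%:R : R) sigma /\
      congmx ((p ^ 2)%:R : R) sigma (mx2 1 (p%:R : R) 0 1)) ->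
  (forall n : nat, (0 < n)%N ->
      index_eq (Hcong ((p ^ n)%:R : R)) (Hcong ((p ^ n.+1)%:R : R)) (p ^ 6)) /\
  (forall n : nat, (0 < n)%N ->
      exists k : nat,
        index_eq (@H5 R) (Hcong (p%:R : R)) k /\
        index_eq (@H5 R) (Hcong ((p ^ n)%:R : R)) (p ^ (6 * (n - 1)) * k)).
Proof.
move=> p_prime p_odd [sigma [Hsigma]]; rewrite natrX => sigma_p2.
have p_gt0 := prime_gt0 p_prime.
have index_step n : (0 < n)%N ->
    index_eq (Hcong ((p%:R : R) ^+ n)) (Hcong ((p%:R : R) ^+ n.+1)) (p ^ 6).
  by move=> n_gt0; apply: index_Hcong_succ => //; apply: tangents_E12 Hsigma sigma_p2.
split=> [n n_gt0|n n_gt0]; first by rewrite !natrX; apply: index_step.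
have [k H5_Hp] := index_H5_Hcong R p_gt0; exists k; split=> //.
by rewrite natrX expnM subn1; apply: index_H5_Hcong_pow.
Qed.
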